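(* Let $L$ be a finite lattice and let $\phi:\ \hat 0=x_0<x_1<\dots<x_k=\hat 1$ be a chain of $L$ containing its minimum $\hat 0$ and maximum $\hat 1$. Let $\gamma_1,\gamma_1',\gamma_2,\gamma_2'$ be the four edge-labellings of $L$ associated to $\phi$ (defined in the context). Then, as functions on the set of cover relations of $L$ with values in the integers, $\gamma_2=\gamma_2'\le\gamma_1=\gamma_1'$ (pointwise). Moreover, $\gamma_1'=\gamma_2'$ if and only if $x_i$ is a left modular element of $L$ for every $i\in\{0,\dots,k\}$.
   Context: All lattices are finite. A join-irreducible element $j$ covers exactly one element; a meet-irreducible element $m$ is covered by exactly one element. For a join-irreducible $j$ set $\delta(j):=\min\{i\mid j\le x_i\}$; for a meet-irreducible $m$ set $\beta(m):=\max\{i\in\{1,\dots,k\}\mid m\ge x_{i-1}\}$. For a cover relation $b\lessdot c$ of $L$ define $\gamma_1(b\lessdot c):=\min\{\delta(j)\mid j \text{ join-irreducible},\ j\le c,\ j\not\le b\}$, $\gamma_1'(b\lessdot c):=\max\{i\in\{1,\dots,k\}\mid c\wedge x_{i-1}\le b\}$, $\gamma_2(b\lessdot c):=\max\{\beta(m)\mid m \text{ meet-irreducible},\ m\ge b,\ m\not\ge c\}$, $\gamma_2'(b\lessdot c):=\min\{i\in\{0,\dots,k\}\mid b\vee x_i\ge c\}$. An element $a\in L$ is left modular if for all $b<c$ in $L$ one has $(b\vee a)\wedge c=b\vee(a\wedge c)$. *)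

From mathcomp Require Import all_boot all_order.
Set Implicit Arguments. Unset Strict Implicit. Unset Printing Implicit Defensive.
Import Order.TTheory.
Local Open Scope order_scope.

Section LatticeDefs.
Context {disp : Order.disp_t} {L : finTBLatticeType disp}.

Definition covers (b c : L) : bool :=
  (b < c) && [forall z : L, ~~ ((b < z) && (z < c))].

Definition join_irr (j : L) : bool := #|[set y : L | covers y j]| == 1%N.
Definition meet_irr (m : L) : bool := #|[set y : L | covers m y]| == 1%N.

Definition left_modular (a : L) : Prop :=
  forall b c : L, b < c -> (b `|` a) `&` c = b `|` (a `&` c).

(* The chain is x 0 < x 1 < ... < x k ; values of x beyond k are irrelevant. *)
Definition is_max_chain (k : nat) (x : nat -> L) : Prop :=
  x 0%N = \bot /\ x k = \top /\ (forall i, (i < k)%N -> x i < x i.+1).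

Variables (k : nat) (x : nat -> L).

(* delta(j) = min { i in 0..k | j <= x_i }  (nonempty since x_k = top) *)
Definition delta (j : L) : nat := \big[minn/k]_(i < k.+1 | j <= x i) (i : nat).
Definition beta (m : L) : nat := \max_(1 <= i < k.+1 | x i.-1 <= m) i.

Definition gamma1 (b c : L) : nat :=
  \big[minn/k]_(j : L | [&& join_irr j, j <= c & ~~ (j <= b)]) delta j.
Definition gamma1' (b c : L) : nat :=
  \max_(1 <= i < k.+1 | c `&` x i.-1 <= b) i.
Definition gamma2 (b c : L) : nat :=
  \max_(m : L | [&& meet_irr m, b <= m & ~~ (c <= m)]) beta m.
Definition gamma2' (b c : L) : nat :=
  \big[minn/k]_(i < k.+1 | c <= b `|` x i) (i : nat).

End LatticeDefs.

From mathcomp Require Import all_boot all_order.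
From mathcomp Require Import zify.
Import Order.TTheory.
Local Open Scope order_scope.

(* Along the chain, c `&` x_i <= b holds exactly for i < gamma1'(b, c) and
   c <= b `|` x_i exactly for i >= gamma2'(b, c); likewise delta(j) and
   beta(m) are the thresholds of j <= x_i and x_i <= m.  A minimal element
   below c `&` x_(gamma1') but not below b is join-irreducible, which gives
   gamma1 = gamma1'; dually gamma2 = gamma2'.  When c covers b, the element
   b `|` (c `&` x_(gamma1')) lies strictly above b and below c, hence is c, so
   gamma2' <= gamma1'.  Finally, a is left modular iff f `&` a is not below d
   whenever f covers d and f <= d `|` a: if b `|` (a `&` c) < (b `|` a) `&` c,
   a cover of the former below the latter violates this.  For a = x_i the
   condition reads "gamma2' <= i implies gamma1' <= i". *)

Lemma exists_minimal {disp : Order.disp_t} {T : finPOrderType disp}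
    (P : pred T) {z : T} :
  P z -> exists2 m, P m & forall y, y < m -> ~~ P y.
Proof.
move=> Pz; have [m Pm m_min] := arg_minnP (fun y => #|[set w : T | w < y]|) Pz.
exists m => // y ltym; apply/negP => /m_min; apply/negP; rewrite -ltnNge.
apply: proper_card; apply/properP; split; last by exists y; rewrite !inE ?ltxx.
by apply/subsetP => w; rewrite !inE => /lt_trans; apply.
Qed.

Section Covers.
Context {disp : Order.disp_t} {L : finTBLatticeType disp}.
Implicit Types (b c d e : L).

Lemma coversP b c :
  reflect (b < c /\ forall z, b < z -> z < c -> False) (covers b c).
Proof.
apply: (iffP andP) => [[bc /forallP bc_min] | [bc bc_min]]; split => //.
  by move=> z bz zc; have := bc_min z; rewrite bz zc.
by apply/forallP => z; apply/negP => /andP[]; apply: bc_min.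
Qed.

Lemma covers_lt {b c : L} : covers b c -> b < c.
Proof. by case/andP. Qed.

Lemma covers_geF {b c : L} : covers b c -> (c <= b) = false.
Proof. by move/covers_lt/lt_geF. Qed.

Lemma covers_between {b c z : L} :
  covers b c -> b <= z -> z <= c -> (z == b) || (z == c).
Proof.
move=> /coversP[_ bc_min] bz zc; apply/negPn/negP; rewrite negb_or => /andP[zb zc'].
by apply: (bc_min z); rewrite lt_neqAle ?bz ?zc ?zc' // andbT eq_sym.
Qed.

Lemma covers_dual b c : @covers _ L^d b c = covers c b.
Proof. by rewrite /covers; congr andb; apply: eq_forallb => z; rewrite andbC. Qed.

Lemma meet_irr_dual (m : L) : meet_irr m = @join_irr _ L^d m.
Proof.
by rewrite /meet_irr /join_irr !cardsE; congr (_ == _); apply: eq_card => y;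
  exact: esym (covers_dual y m).
Qed.

Lemma exists_cover_above {d e : L} : d < e -> exists2 f, covers d f & f <= e.
Proof.
move=> de; have Pe : (d < e) && (e <= e) by rewrite de lexx.
have [f /andP[df fe] f_min] := exists_minimal (fun z => (d < z) && (z <= e)) Pe.
exists f => //; apply/coversP; split => // z dz zf.
by move: (f_min z zf); rewrite dz (le_trans (ltW zf) fe).
Qed.

End Covers.

Section JoinIrreducibles.
Context {disp : Order.disp_t} {L : finTBLatticeType disp}.
Implicit Types (a b d e : L).

Lemma exists_cover_below d e : e < d -> exists2 f, covers f d & e <= f.
Proof.
move=> ed; have [f] := @exists_cover_above _ L^d d e ed.
by rewrite covers_dual; exists f.
Qed.

Lemma exists_join_irr a b : ~~ (a <= b) ->
  exists j, [&& join_irr j, j <= a & ~~ (j <= b)].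
Proof.
move=> nab; have Pa : (a <= a) && ~~ (a <= b) by rewrite lexx nab.
have [j /andP[ja njb] j_min] := exists_minimal (fun z => (z <= a) && ~~ (z <= b)) Pa.
have below_j y : y < j -> y <= b.
  by move=> yj; move: (j_min y yj); rewrite (le_trans (ltW yj) ja) negbK.
have [y0 y0j _] : exists2 y0, covers y0 j & \bot <= y0.
  by apply: exists_cover_below; rewrite lt0x; apply: contraNneq njb => ->.
exists j; rewrite ja njb !andbT; apply/cards1P; exists y0; apply/setP => y.
rewrite !inE; apply/idP/eqP => [yj | -> //].
have yy0j : y `|` y0 <= j by rewrite leUx !ltW ?covers_lt.
have /orP[/eqP yy0E | /eqP yy0E] := covers_between y0j (leUr y0 y) yy0j.
  have yy0 : y <= y0 by rewrite -yy0E leUl.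
  have /orP[/eqP // | /eqP y0E] := covers_between yj yy0 (ltW (covers_lt y0j)).
  by move: (covers_lt y0j); rewrite y0E ltxx.
by move: njb; rewrite -yy0E leUx !below_j ?covers_lt.
Qed.

End JoinIrreducibles.

Lemma exists_meet_irr {disp : Order.disp_t} {L : finTBLatticeType disp} (a c : L) :
  ~~ (c <= a) -> exists m, [&& meet_irr m, a <= m & ~~ (c <= m)].
Proof.
move=> nca; have [m] := @exists_join_irr _ L^d a c nca.
by rewrite -meet_irr_dual; exists m.
Qed.

Lemma left_modularP {disp : Order.disp_t} {L : finTBLatticeType disp} (a : L) :
  left_modular a <-> forall d f, covers d f -> f <= d `|` a -> ~~ (f `&` a <= d).
Proof.
split => [a_lmod d f df fda | cover_cond b c bc].
  apply/negP => fad; have := a_lmod d f (covers_lt df).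
  rewrite meet_r // meetC join_l // => fd.
  by move: (covers_lt df); rewrite fd ltxx.
set d := b `|` (a `&` c); set e := (b `|` a) `&` c.
have de : d <= e by rewrite lexI leU2 ?leIl //= leUx (ltW bc) leIr.
apply/eqP; rewrite eq_le de andbT; apply/negPn/negP => ned.
have [f df fe] : exists2 f, covers d f & f <= e.
  by apply: exists_cover_above; rewrite lt_leAnge de ned.
have fc : f <= c := le_trans fe (leIr _ _).
have fda : f <= d `|` a.
  exact: le_trans fe (le_trans (leIl _ _) (leU2 (leUl _ _) (lexx a))).
move/negP: (cover_cond d f df fda); apply.
by rewrite meetC (le_trans (leI2 (lexx a) fc) (leUr _ _)).
Qed.

Section Thresholds.
Variables (k : nat) (P : pred nat).

Lemma bigmin_ord_leqE :
  P k -> (forall i j, (i <= j <= k)%N -> P i -> P j) ->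
  forall i, (i <= k)%N -> (\big[minn/k]_(j < k.+1 | P j) j <= i)%N = P i.
Proof.
move=> Pk P_up i ik; apply/idP/idP => [min_le | Pi].
  have Pmin : P (\big[minn/k]_(j < k.+1 | P j) j).
    by elim/big_ind: _ => // m n Pm Pn; rewrite /minn; case: ifP.
  by apply: P_up Pmin; rewrite min_le.
have ik1 : (i < k.+1)%N by rewrite ltnS.
exact: (@bigmin_le_cond _ nat _ k (Ordinal ik1) (fun j => P j) (fun j => j) Pi).
Qed.

Lemma bigmax_iota_le : (\max_(1 <= i < k.+1 | P i) i <= k)%N.
Proof. by apply/bigmax_leqP_seq => i; rewrite mem_index_iota ltnS => /andP[]. Qed.

Lemma bigmax_iota_gtnE :
  (forall i j, (i <= j < k)%N -> P j -> P i) ->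
  forall i, (i < k)%N -> (i < \max_(1 <= j < k.+1 | P j.-1) j)%N = P i.
Proof.
move=> P_down i ik; apply/idP/idP => [| Pi]; last first.
  by apply: (leq_bigmax_seq i.+1) => //; rewrite mem_index_iota ltnS.
set M := \max_(_ <= _ < _ | _) _.
have : (M == 0%N) || P M.-1 && (M <= k)%N.
  rewrite /M big_seq_cond; elim/big_ind: _ => [//| m n | j] /=.
  - by rewrite /maxn; case: ifP.
  - by rewrite mem_index_iota ltnS => /andP[/andP[_ ->] ->]; rewrite orbT.
case/orP => [/eqP -> // | /andP[PM Mk] iM].
by apply: P_down PM; lia.
Qed.

End Thresholds.

Section ChainLabels.
Context {disp : Order.disp_t} {L : finTBLatticeType disp}.
Context {k : nat} {x : nat -> L}.
Hypothesis chain : is_max_chain k x.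
Implicit Types (b c m : L).

Lemma chain_bot : x 0%N = \bot.
Proof. by case: chain. Qed.

Lemma chain_top : x k = \top.
Proof. by case: chain => _ []. Qed.

Lemma chain_le i j : (i <= j <= k)%N -> x i <= x j.
Proof.
case: chain => _ [_ x_lt] /andP[ij jk].
have x_mono : {in [pred n | n <= k]%N &, {homo x : i j / (i <= j)%N >-> i <= j}}.
  apply: homo_leq_in => [//|y z w|i1 j1|n]; rewrite ?inE.
  - exact: le_trans.
  - by move=> _ j1k n /andP[_ /ltnW nj1]; rewrite inE (leq_trans nj1 j1k).
  - by move=> _ nk; rewrite ltW ?x_lt.
by apply: x_mono; rewrite ?inE ?(leq_trans ij).
Qed.

Lemma delta_leqE (j : L) i : (i <= k)%N -> (delta k x j <= i)%N = (j <= x i).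
Proof.
apply: (bigmin_ord_leqE k (fun i => j <= x i)); first by rewrite chain_top lex1.
by move=> i1 j1 ij1 /le_trans; apply; apply: chain_le.
Qed.

Lemma delta_leq_k (j : L) : (delta k x j <= k)%N.
Proof. by rewrite delta_leqE // chain_top lex1. Qed.

Lemma beta_gtnE m i : (i < k)%N -> (i < beta k x m)%N = (x i <= m).
Proof.
apply: (bigmax_iota_gtnE k (fun i => x i <= m)) => i1 j1 ij1.
by apply: le_trans; apply: chain_le; lia.
Qed.

Lemma gamma2'_leqE b c i : (i <= k)%N -> (gamma2' k x b c <= i)%N = (c <= b `|` x i).
Proof.
apply: (bigmin_ord_leqE k (fun i => c <= b `|` x i)).
  by rewrite chain_top joinx1 lex1.
by move=> i1 j1 ij1 /le_trans; apply; rewrite leU2 ?chain_le.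
Qed.

Lemma gamma2'_leq_k b c : (gamma2' k x b c <= k)%N.
Proof. by rewrite gamma2'_leqE // chain_top joinx1 lex1. Qed.

Lemma gamma1'_leqE b c i : ~~ (c <= b) -> (i <= k)%N ->
  (gamma1' k x b c <= i)%N = ~~ (c `&` x i <= b).
Proof.
move=> ncb; rewrite leq_eqVlt => /predU1P[-> | ik].
  by rewrite chain_top meetx1 ncb bigmax_iota_le.
rewrite leqNgt (bigmax_iota_gtnE k (fun i => c `&` x i <= b)) // => i1 j1 ij1.
by apply: le_trans; rewrite leI2 ?chain_le //; lia.
Qed.

Lemma gamma1E b c : ~~ (c <= b) -> gamma1 k x b c = gamma1' k x b c.
Proof.
move=> ncb; set g := gamma1' k x b c.
have g_le : (g <= k)%N by apply: bigmax_iota_le.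
apply/eqP; rewrite eqn_leq; apply/andP; split.
  have : ~~ (c `&` x g <= b) by rewrite -gamma1'_leqE.
  case/exists_join_irr => j /and3P[j_irr jcx njb].
  have jc : j <= c := le_trans jcx (leIl _ _).
  apply: leq_trans (bigmin_le_cond (j := j) k (delta k x) _) _.
    by rewrite j_irr jc njb.
  by rewrite delta_leqE // (le_trans jcx (leIr _ _)).
apply/(bigmin_geP k g); split => // j /and3P[_ jc njb].
rewrite leEnat /g gamma1'_leqE ?delta_leq_k //.
apply: contra njb => /(le_trans _); apply.
by rewrite lexI jc /= -delta_leqE ?delta_leq_k.
Qed.

Lemma gamma2E b c : ~~ (c <= b) -> gamma2 k x b c = gamma2' k x b c.
Proof.
move=> ncb; set g := gamma2' k x b c.
have g_le : (g <= k)%N by apply: gamma2'_leq_k.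
have g_gt0 : (0 < g)%N.
  rewrite lt0n; apply: contraNneq ncb => g0.
  by rewrite -[b]joinx0 -chain_bot -gamma2'_leqE // -/g g0.
apply/eqP; rewrite eqn_leq; apply/andP; split.
  apply/bigmax_leqP => m /and3P[_ bm ncm]; rewrite leqNgt; apply: contra ncm => g_lt.
  have xgm : x g <= m by rewrite -beta_gtnE // (leq_trans g_lt) ?bigmax_iota_le.
  have bxm : b `|` x g <= m by rewrite leUx bm xgm.
  by apply: le_trans _ bxm; rewrite -gamma2'_leqE.
have : ~~ (c <= b `|` x g.-1) by rewrite -gamma2'_leqE -?ltnNge ?ltn_predL //; lia.
case/exists_meet_irr => m /and3P[m_irr bxm ncm].
have m_sel : [&& meet_irr m, b <= m & ~~ (c <= m)].
  by rewrite m_irr ncm (le_trans (leUl _ _) bxm).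
apply: leq_trans (leq_bigmax_cond (F := beta k x) _ m_sel).
by rewrite -(prednK g_gt0) beta_gtnE ?(le_trans (leUr _ _) bxm) //; lia.
Qed.

Lemma gamma2'_leq_gamma1' b c : covers b c -> (gamma2' k x b c <= gamma1' k x b c)%N.
Proof.
move=> bc; set g := gamma1' k x b c.
have g_le : (g <= k)%N by apply: bigmax_iota_le.
have ncxb : ~~ (c `&` x g <= b) by rewrite -gamma1'_leqE ?(covers_geF bc).
rewrite gamma2'_leqE //.
have bcx_le : b `|` (c `&` x g) <= c by rewrite leUx leIl ltW ?covers_lt.
have /orP[/eqP bE | /eqP cE] := covers_between bc (leUl b (c `&` x g)) bcx_le.
  by move: ncxb; rewrite -bE leUr.
by rewrite -cE leU2 ?leIr.
Qed.

End ChainLabels.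

Theorem theorem3p3 (disp : Order.disp_t) (L : finTBLatticeType disp)
    (k : nat) (x : nat -> L) :
  is_max_chain k x ->
  (forall b c : L, covers b c ->
     gamma2 k x b c = gamma2' k x b c /\
     (gamma2' k x b c <= gamma1 k x b c)%N /\
     gamma1 k x b c = gamma1' k x b c) /\
  ((forall b c : L, covers b c -> gamma1' k x b c = gamma2' k x b c) <->
   (forall i, (i <= k)%N -> left_modular (x i))).
Proof.
move=> chain; split => [b c bc|].
  by rewrite gamma1E ?gamma2E ?gamma2'_leq_gamma1' ?(covers_geF bc).
split => [eq_g i ik | x_lmod b c bc].
  apply/left_modularP => d f df fdx.
  by rewrite -(gamma1'_leqE chain) ?(covers_geF df) // eq_g // gamma2'_leqE.
have g2_le := gamma2'_leq_k chain b c.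
apply/eqP; rewrite eqn_leq gamma2'_leq_gamma1' // andbT.
rewrite gamma1'_leqE ?(covers_geF bc) //.
apply: (left_modularP _).1 bc _; first exact: x_lmod.
by rewrite -(gamma2'_leqE chain).
Qed.
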